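(* Let $T$ be a quasi-binary tree with $|V(T)|>1$ and vertex weight function $\omega:V(T)\to\mathbb{R}$. Let $\gamma\in\mathbb{R}$ with $\gamma\ge\omega_3$. If $$\omega(T)\ge\max\left\{\frac{3\omega_1-\gamma}{2},\ 3\omega_2-2\gamma\right\},$$ then $$\beta_2(T)\ge\frac{\omega(T)-\gamma}{3}\quad\text{and}\quad \alpha_2(T)\le\frac{2\omega(T)+\gamma}{3}.$$
   Context: A binary tree is a tree in which every vertex has degree $3$, except for pending vertices (degree $1$) and one root vertex (degree $2$). A tree is quasi-binary if it is a connected subgraph of a binary tree; in particular every vertex has degree $1$, $2$ or $3$. For a subgraph $H$ write $\omega(H)=\sum_{v\in V(H)}\omega(v)$. For $i=1,2,3$ let $V_i$ be the set of vertices of degree $i$, and let $\omega_i=\max\{\omega(v): v\in V_j \text{ for some } j \text{ with } i\le j\le 3\}$ (the maximum weight of a vertex of degree at least $i$). For an edge $e$, let $C^1_e, C^2_e$ be the two components of $T\setminus\{e\}$. Define $\alpha_2(T)=\min_{e\in E(T)}\max\{\omega(C^1_e),\omega(C^2_e)\}$ and $\beta_2(T)=\max_{e\in E(T)}\min\{\omega(C^1_e),\omega(C^2_e)\}$. *)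

From HB Require Import structures.
From mathcomp Require Import all_boot all_order all_algebra.
Set Implicit Arguments. Unset Strict Implicit. Unset Printing Implicit Defensive.
Import Order.TTheory GRing.Theory Num.Theory.
Local Open Scope ring_scope.

Definition simple_graph (V : finType) (e : rel V) : Prop :=
  symmetric e /\ irreflexive e.

Definition deg (V : finType) (e : rel V) (x : V) : nat := #|[set y | e x y]|.

Definition del_edge (V : finType) (e : rel V) (x y : V) : rel V :=
  fun a b => e a b && ~~ (((a == x) && (b == y)) || ((a == y) && (b == x))).

(* A tree: connected simple graph in which every edge is a bridge
   (i.e. a minimally connected graph, equivalently connected and acyclic). *)
Definition is_tree (V : finType) (e : rel V) : Prop :=
  [/\ simple_graph e,
      (forall x y : V, connect e x y) &
      (forall x y : V, e x y -> ~~ connect (del_edge e x y) x y)].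

Definition is_binary_tree (V : finType) (e : rel V) : Prop :=
  is_tree e /\
  exists r : V, deg e r = 2%N /\
    forall v : V, v != r -> (deg e v = 1%N \/ deg e v = 3%N).

Definition quasi_binary (V : finType) (e : rel V) : Prop :=
  is_tree e /\
  exists (U : finType) (f : rel U) (phi : V -> U),
    [/\ is_binary_tree f, injective phi &
        forall x y : V, e x y -> f (phi x) (phi y)].

Section Weights.
Variables (R : realFieldType) (V : finType) (e : rel V) (w : V -> R).

Definition wsum (A : pred V) : R := \sum_(v | A v) w v.

Definition wT : R := wsum predT.

Definition comp_w (x y : V) : R := wsum (connect (del_edge e x y) x).

Definition edge_seq : seq (V * V) := enum [pred p : V * V | e p.1 p.2].

Definition seq_min (s : seq R) : R := \big[Num.min/head 0 s]_(r <- s) r.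
Definition seq_max (s : seq R) : R := \big[Num.max/head 0 s]_(r <- s) r.

Definition alpha2 : R :=
  seq_min [seq Num.max (comp_w p.1 p.2) (comp_w p.2 p.1) | p <- edge_seq].

Definition beta2 : R :=
  seq_max [seq Num.min (comp_w p.1 p.2) (comp_w p.2 p.1) | p <- edge_seq].

(* omega_i = max weight of a vertex of degree >= i; None if there is no
   such vertex (max of the empty set, treated as -infinity). *)
Definition omega_i (i : nat) : option R :=
  let s := [seq w v | v <- enum [pred v | (i <= deg e v)%N]] in
  if s is r :: _ then Some (seq_max s) else None.

End Weights.

Definition opt_le (R : realFieldType) (o : option R) (c : R) : Prop :=
  if o is Some m then m <= c else True.

(* Let θ = (ω(T) - γ)/3.  If some edge splits T into two components of weight
   at least θ, both bounds follow at once.  Otherwise every edge has at most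
   one heavy side; following an edge with a heavy far side whose branch is
   smallest leads to a vertex v all of whose branches weigh less than θ, so
   ω(T) < ω(v) + deg(v) θ.  For deg v = 1, 2, 3 this contradicts the
   hypothesis involving ω_1, ω_2, γ ≥ ω_3 respectively, since deg v ≤ 3 in a
   quasi-binary tree. *)

From HB Require Import structures.
From mathcomp Require Import all_boot all_order all_algebra.
From mathcomp Require Import ring lra.
Import Order.TTheory GRing.Theory Num.Theory.
Local Open Scope ring_scope.
Set Implicit Arguments. Unset Strict Implicit.

Lemma connect_forward_closed (T : finType) (r : rel T) (P : pred T) x z :
  P x -> (forall a b, P a -> r a b -> P b) -> connect r x z -> P z.
Proof.
move=> Px rP /connectP [p]; elim: p x Px => [|b p IH] x Px /=; first by move=> _ ->.
by case/andP=> rxb pth zl; apply: (IH b (rP _ _ Px rxb) pth zl).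
Qed.

Lemma seq_max_ge (R : realFieldType) (s : seq R) z : z \in s -> z <= seq_max s.
Proof. by move=> zs; exact: (@le_bigmax_seq _ _ R s (head 0 s) z xpredT id zs). Qed.

Lemma seq_min_le (R : realFieldType) (s : seq R) z : z \in s -> seq_min s <= z.
Proof. by move=> zs; exact: (@ge_bigmin_seq _ _ R s (head 0 s) z xpredT id zs). Qed.

Lemma deg_le_hom (U V : finType) (e : rel V) (f : rel U) (phi : V -> U) v :
  injective phi -> (forall x y, e x y -> f (phi x) (phi y)) ->
  (deg e v <= deg f (phi v))%N.
Proof.
move=> inj_phi hom; rewrite /deg -(card_imset _ inj_phi); apply: subset_leq_card.
by apply/subsetP => z /imsetP [y]; rewrite !inE => evy ->; exact: hom.
Qed.

Lemma quasi_binary_deg_le3 (V : finType) (e : rel V) v :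
  quasi_binary e -> (deg e v <= 3)%N.
Proof.
move=> [_ [U [f [phi [[_ [r [fr fo]]] inj_phi hom]]]]].
apply: leq_trans (deg_le_hom v inj_phi hom) _.
by case: (eqVneq (phi v) r) => [->|nr]; [rewrite fr | case: (fo _ nr) => ->].
Qed.

Lemma omega_i_ge (R : realFieldType) (V : finType) (e : rel V) (w : V -> R) i v :
  (i <= deg e v)%N -> exists2 m, omega_i e w i = Some m & w v <= m.
Proof.
move=> hi; rewrite /omega_i.
have : w v \in [seq w u | u <- enum [pred u | (i <= deg e u)%N]].
  by apply: map_f; rewrite mem_enum.
by case: [seq _ | _ <- _] => // a s wv_in; exists (seq_max (a :: s)) => //; exact: seq_max_ge.
Qed.

Section Tree.
Variables (V : finType) (e : rel V).
Hypothesis e_sym : symmetric e.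
Hypothesis e_conn : forall x y, connect e x y.
Hypothesis e_bridge : forall x y, e x y -> ~~ connect (del_edge e x y) x y.

Definition branch (v u : V) : pred V := connect (del_edge e v u) u.

Lemma del_edge_sym x y : symmetric (del_edge e x y).
Proof.
by move=> a b; rewrite /del_edge e_sym [(b == x) && _]andbC [(b == y) && _]andbC orbC.
Qed.

Lemma del_edgeC x y : del_edge e x y =2 del_edge e y x.
Proof. by move=> a b; rewrite /del_edge orbC. Qed.

Lemma connect_del_edge_sym x y : connect_sym (del_edge e x y).
Proof. exact: sym_connect_sym (del_edge_sym x y). Qed.

Lemma branch_self v u : branch v u u.
Proof. exact: connect0. Qed.

Lemma branch_root v u : e v u -> ~~ branch v u v.
Proof. by move=> evu; rewrite /branch connect_del_edge_sym; apply: e_bridge. Qed.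

Lemma branch_neq_root v u z : e v u -> branch v u z -> z != v.
Proof. by move=> evu; apply: contraTneq => ->; exact: branch_root. Qed.

Lemma branch_step v u a b :
  e v u -> branch v u a -> e a b -> b != v -> branch v u b.
Proof.
move=> evu Ba eab bv; have av := branch_neq_root evu Ba.
apply: connect_trans Ba (connect1 _).
by rewrite /del_edge eab (negbTE av) (negbTE bv) /= andbF.
Qed.

Lemma branch_cover v z : z != v -> exists2 u, e v u & branch v u z.
Proof.
move=> zv; pose P a := (a == v) || [exists u, e v u && branch v u a].
have : P z.
  apply: (connect_forward_closed _ _ (e_conn v z)); first by rewrite /P eqxx.
  move=> a b Pa eab; rewrite /P; case: (eqVneq b v) => //= bv.
  case/orP: Pa => [/eqP av|/existsP [u /andP [evu Bua]]].
    by apply/existsP; exists b; rewrite -av eab branch_self.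
  by apply/existsP; exists u; rewrite evu (branch_step evu Bua).
by rewrite /P (negbTE zv) => /existsP [u /andP [evu Buz]]; exists u.
Qed.

Lemma branch_uniq v u1 u2 z :
  e v u1 -> e v u2 -> branch v u1 z -> branch v u2 z -> u1 = u2.
Proof.
move=> e1 e2 B1 B2; apply/eqP; apply: contraT => u12.
pose P a := branch v u2 a && connect (del_edge e v u1) u2 a.
have /andP [_ C2] : P z.
  apply: (connect_forward_closed _ _ B2); first by rewrite /P branch_self connect0.
  move=> a b /andP [Ba Ca] Dab.
  have Bb : branch v u2 b := connect_trans Ba (connect1 Dab).
  rewrite /P Bb; apply: connect_trans Ca (connect1 _).
  move: Dab; rewrite /del_edge => /andP [-> _].
  by rewrite (negbTE (branch_neq_root e2 Ba)) (negbTE (branch_neq_root e2 Bb)) /= andbF.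
have C12 : connect (del_edge e v u1) u1 u2.
  by apply: connect_trans B1 _; rewrite connect_del_edge_sym.
suff : branch v u1 v by rewrite (negbTE (branch_root e1)).
apply: connect_trans C12 (connect1 _).
rewrite /del_edge e_sym e2 /= (negbTE (branch_neq_root e2 (branch_self v u2))).
by rewrite [u2 == u1]eq_sym (negbTE u12).
Qed.

Lemma branchC x y z : e x y -> branch x y z = ~~ branch y x z.
Proof.
move=> exy; have Byx : branch y x =1 connect (del_edge e x y) x.
  by move=> a; rewrite /branch (eq_connect (del_edgeC y x)).
rewrite Byx; apply/idP/idP.
  move=> Byz; apply/negP => Bxz; apply: (negP (e_bridge exy)).
  by apply: connect_trans Bxz _; rewrite connect_del_edge_sym.
pose P a := connect (del_edge e x y) x a || branch x y a.
have : P z.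
  apply: (connect_forward_closed _ _ (e_conn x z)); first by rewrite /P connect0.
  move=> a b Pa eab; case Dab: (del_edge e x y a b).
    by case/orP: Pa => Ca; rewrite /P /branch (connect_trans Ca (connect1 Dab)) ?orbT.
  move: Dab; rewrite /del_edge eab /= => /negbFE /orP [] /andP [_ /eqP ->].
    by rewrite /P branch_self orbT.
  by rewrite /P connect0.
by rewrite /P => /orP [] // /[swap] /negbTE ->.
Qed.

Lemma branch_sub x y u z :
  e x y -> e y u -> u != x -> branch y u z -> branch x y z.
Proof.
move=> exy eyu ux Bz; rewrite (branchC z exy); apply/negP => Bz'.
by move: ux; rewrite (branch_uniq eyu _ Bz Bz') ?eqxx // e_sym.
Qed.

Variables (R : realFieldType) (w : V -> R).

Lemma wT_vertex_split v :
  wT w = w v + \sum_(u in [set y | e v y]) wsum w (branch v u).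
Proof.
rewrite /wT /wsum (bigD1 v) //=; congr (_ + _); symmetry.
rewrite (exchange_big_dep (fun z => z != v)) /=; last first.
  by move=> u z; rewrite inE; exact: branch_neq_root.
apply: eq_bigr => z zv; have [u0 eu0 Bu0] := branch_cover zv.
rewrite (big_pred1 u0) // => u; rewrite inE /=; apply/idP/eqP.
  by case/andP=> evu Bu; apply: branch_uniq evu eu0 Bu Bu0.
by move=> ->; rewrite eu0 Bu0.
Qed.

Lemma wT_edge_split x y : e x y -> wT w = wsum w (branch x y) + wsum w (branch y x).
Proof.
move=> exy; rewrite /wT /wsum (bigID (branch x y)) /=; congr (_ + _).
by apply: eq_bigl => z /=; rewrite (branchC z exy) negbK.
Qed.

Lemma comp_w_branch x y : comp_w e w x y = wsum w (branch y x).
Proof. by apply: eq_bigl => z; rewrite /branch (eq_connect (del_edgeC y x)). Qed.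

Lemma balanced_edge_bounds (th : R) x y :
  e x y -> th <= wsum w (branch x y) -> th <= wsum w (branch y x) ->
  th <= beta2 e w /\ alpha2 e w <= wT w - th.
Proof.
move=> exy hxy hyx; have sW := wT_edge_split exy.
have xy_in : (x, y) \in edge_seq e by rewrite /edge_seq mem_enum.
split.
  apply: le_trans (seq_max_ge (map_f _ xy_in)).
  by rewrite /= !comp_w_branch le_min hxy hyx.
apply: le_trans (seq_min_le (map_f _ xy_in)) _.
by rewrite /= !comp_w_branch ge_max; apply/andP; split; lra.
Qed.

(* If no edge is balanced, then among the edges with a heavy far side, one
   with the smallest far branch points to a vertex all of whose branches are
   light. *)
Lemma balanced_edge_or_light_vertex (th : R) : V ->
  (exists x y, [/\ e x y, th <= wsum w (branch x y) & th <= wsum w (branch y x)])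
  \/ exists v, forall u, e v u -> wsum w (branch v u) < th.
Proof.
move=> v0; pose heavy (p : V * V) := e p.1 p.2 && (th <= wsum w (branch p.1 p.2)).
case: (pickP heavy) => [p0 heavy_p0 | no_heavy]; last first.
  right; exists v0 => u ev0u; rewrite ltNge; apply/negP => h.
  by move: (no_heavy (v0, u)); rewrite /heavy /= ev0u h.
case: (arg_minnP (fun p : V * V => #|branch p.1 p.2|) heavy_p0)
  => -[x y] /andP [/= exy hxy] min_xy.
have [hyx | /negP hyx] := boolP (th <= wsum w (branch y x)); first by left; exists x, y.
right; exists y => u eyu; rewrite ltNge; apply/negP => hyu.
have ux : u != x by apply: contra_not_neq hyx => <-.
have := min_xy (y, u); rewrite /heavy /= eyu hyu leqNgt => /(_ isT) /negP; apply.
apply: proper_card; apply/properP; split.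
  by apply/subsetP => z; rewrite !unfold_in; exact: branch_sub.
by exists y; [exact: branch_self | exact: branch_root].
Qed.

Lemma neighbour_exists v : (1 < #|V|)%N -> exists u, e v u.
Proof.
move=> /card_gt1P [x0 [y0 [_ _ x0y0]]].
have [z zv] : exists z, z != v.
  by case: (eqVneq x0 v) => [<-|]; [exists y0; rewrite eq_sym | exists x0].
by have [u evu _] := branch_cover zv; exists u.
Qed.

Lemma wT_lt_light_vertex (th : R) v u0 :
  e v u0 -> (forall u, e v u -> wsum w (branch v u) < th) ->
  wT w < w v + th *+ deg e v.
Proof.
move=> evu0 light; rewrite (wT_vertex_split v) ltrD2l /deg -sumr_const.
apply: ltr_sum; last by move=> u; rewrite inE; exact: light.
by apply/hasP; exists u0; [exact: mem_index_enum | rewrite inE].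
Qed.

End Tree.

Theorem lemma2 (R : realFieldType) (V : finType) (e : rel V) (w : V -> R)
    (gamma : R) :
  quasi_binary e ->
  (1 < #|V|)%N ->
  opt_le (omega_i e w 3) gamma ->
  opt_le (omap (fun m => (3 * m - gamma) / 2) (omega_i e w 1)) (wT w) ->
  opt_le (omap (fun m => 3 * m - 2 * gamma) (omega_i e w 2)) (wT w) ->
  (wT w - gamma) / 3 <= beta2 e w /\ alpha2 e w <= (2 * wT w + gamma) / 3.
Proof.
move=> qb V_gt1 h3 h1 h2; have [[[e_sym _] e_conn e_bridge] _] := qb.
set th := (wT w - gamma) / 3.
have -> : (2 * wT w + gamma) / 3 = wT w - th by rewrite /th; field.
have /card_gt0P [x0 _] := ltnW V_gt1.
case: (balanced_edge_or_light_vertex e_sym e_conn e_bridge w th x0)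
  => [[x [y [exy hxy hyx]]] | [v light]].
  exact (balanced_edge_bounds e_sym e_conn e_bridge exy hxy hyx).
have [u0 evu0] := neighbour_exists e_sym e_conn e_bridge v V_gt1.
have := wT_lt_light_vertex e_sym e_conn e_bridge evu0 light.
have deg_pos : (0 < deg e v)%N by apply/card_gt0P; exists u0; rewrite inE.
have [m1 E1 le1] := omega_i_ge w deg_pos; rewrite E1 /= in h1.
have := quasi_binary_deg_le3 v qb; rewrite /th.
case Ed: (deg e v) deg_pos => [|[|[|[|d]]]] //= _ _.
- lra.
- have [m2 E2 le2] := @omega_i_ge _ _ e w 2 v ltac:(by rewrite Ed).
  rewrite E2 /= in h2; lra.
- have [m3 E3 le3] := @omega_i_ge _ _ e w 3 v ltac:(by rewrite Ed).
  rewrite E3 /= in h3; lra.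
Qed.
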